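(* For every integer $n\ge 1$, every independence root $z$ of every finite simple graph on $n$ vertices satisfies $|z|\le 3^{\frac{n}{3}}+n-1$. That is, $M(n)\le 3^{\frac{n}{3}}+n-1$, where $M(n)$ is the maximum modulus of an independence root over all graphs on $n$ vertices.
   Context: For a finite simple graph $G$, the independence polynomial is $i(G,x)=\sum_{k=0}^{\alpha(G)} i_k x^k$, where $i_k$ is the number of independent sets of size $k$ in $G$ (with $i_0=1$) and $\alpha(G)$ is the independence number. Its complex roots are the independence roots of $G$. *)

From HB Require Import structures.
From mathcomp Require Import all_boot all_order all_algebra.
From mathcomp Require Import complex.
From mathcomp Require Import all_classical all_reals all_analysis.
Set Implicit Arguments. Unset Strict Implicit. Unset Printing Implicit Defensive.
Import Order.TTheory GRing.Theory Num.Theory.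
Local Open Scope ring_scope.

Definition simple_graph (T : finType) (e : rel T) : Prop :=
  symmetric e /\ irreflexive e.

Definition independent (T : finType) (e : rel T) (S : {set T}) : bool :=
  [forall x in S, forall y in S, ~~ e x y].

Definition indep_count (T : finType) (e : rel T) (k : nat) : nat :=
  #|[set S : {set T} | independent e S & #|S| == k]|.

Definition indep_poly (R : nzRingType) (T : finType) (e : rel T) : {poly R} :=
  \poly_(k < #|T|.+1) (indep_count e k)%:R.

From HB Require Import structures.
From mathcomp Require Import all_boot all_order all_algebra.
From mathcomp Require Import complex.
From mathcomp Require Import all_classical all_reals all_analysis unstable.
From mathcomp Require Import ring lra zify.
(* Re-imported so that finset's [subsetP], [setD1K], ... shadow the
   homonymous lemmas of classical_sets. *)
From mathcomp Require Import fintype finset.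
Set Implicit Arguments. Unset Strict Implicit. Unset Printing Implicit Defensive.
Import Order.TTheory GRing.Theory Num.Theory ComplexField.
Local Open Scope ring_scope.

(* The coefficients i_k of i(G, x) are positive exactly for k <= alpha(G), and
   a polynomial whose positive coefficients satisfy a_k <= c a_(k+1) has all
   its roots in the disc |z| <= c (Enestrom-Kakeya: multiply by c - x and
   compare the leading term with the others).  A non-maximal independent
   k-set extends to an independent (k+1)-set, which has k+1 subsets of size
   k, so i_k <= m_k + (k+1) i_(k+1), where m_k counts the maximal independent
   k-sets.  The Moon-Moser bound 3^(n/3) on the number of maximal independent
   sets bounds m_k, and k+1 <= n-1 whenever m_k > 0 (otherwise k+1 <= n), so
   i_k <= (3^(n/3) + n - 1) i_(k+1). *)

Lemma mulBr_sum_telescope (F : comNzRingType) (a : nat -> F) (c x : F) (d : nat) :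
  (c - x) * \sum_(k < d.+1) a k * x ^+ k =
  c * a 0%N + \sum_(k < d) (c * a k.+1 - a k) * x ^+ k.+1 - a d * x ^+ d.+1.
Proof.
elim: d => [|d IH]; first by rewrite big_ord1 big_ord0 addr0 expr0 expr1 mulr1; ring.
by rewrite big_ord_recr /= mulrDr IH big_ord_recr /= !exprS; ring.
Qed.

Lemma norm_root_le_coef_ratio (F : numDomainType) (p : {poly F}) (c z : F) :
  p != 0 -> 0 <= c ->
  (forall k, (k < size p)%N -> 0 < p`_k) ->
  (forall k, (k.+1 < size p)%N -> p`_k <= c * p`_k.+1) ->
  root p z -> `|z| <= c.
Proof.
move=> p_neq0 c_ge0 p_gt0 p_ratio /rootP.
have [d size_p] : exists d, size p = d.+1.
  by exists (size p).-1; rewrite prednK // size_poly_gt0.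
rewrite size_p in p_gt0 p_ratio; rewrite horner_coef size_p => pz.
have lead_eq : p`_d * z ^+ d.+1 =
    c * p`_0 + \sum_(k < d) (c * p`_k.+1 - p`_k) * z ^+ k.+1.
  apply/eqP; rewrite eq_sym -subr_eq0 -(mulBr_sum_telescope (nth 0 p)) pz.
  by rewrite mulr0.
have lead_le : p`_d * `|z| ^+ d.+1 <=
    c * p`_0 + \sum_(k < d) (c * p`_k.+1 - p`_k) * `|z| ^+ k.+1.
  have coef_ge0 k : 0 <= p`_k.
    by case: (ltnP k d.+1) => [/p_gt0/ltW // | ?]; rewrite nth_default ?size_p.
  rewrite -[p`_d]ger0_norm // -normrX -normrM lead_eq.
  apply: le_trans (ler_normD _ _) _; rewrite normrM !(ger0_norm c_ge0, ger0_norm (coef_ge0 _)) lerD2l.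
  apply: le_trans (ler_norm_sum _ _ _) _; apply: ler_sum => k _.
  by rewrite normrM normrX ger0_norm // subr_ge0 (p_ratio _ (ltn_ord k)).
have p_normz_gt0 : 0 < \sum_(k < d.+1) p`_k * `|z| ^+ k.
  rewrite big_ord_recl expr0 mulr1 ltr_wpDr ?p_gt0 //.
  by apply: sumr_ge0 => k _; rewrite mulr_ge0 ?exprn_ge0 // ltW ?p_gt0.
by rewrite -subr_ge0 -(pmulr_lge0 _ p_normz_gt0) mulBr_sum_telescope subr_ge0.
Qed.

Lemma cube_le_exp3 k : (k ^ 3 <= 3 ^ k)%N.
Proof.
elim: k => // k IH; have [|k_ge3] := ltnP k 3; first by case: k IH => [|[|[|]]].
rewrite (expnS 3); apply: leq_trans (leq_mul (leqnn 3) IH).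
by rewrite !expnS expn0; nia.
Qed.

Lemma sum_expn_le (I : finType) (A : {pred I}) (x : I -> nat) (k b : nat) :
  (0 < k)%N -> (forall i, i \in A -> x i ^ k <= b)%N ->
  ((\sum_(i in A) x i) ^ k <= #|A| ^ k * b)%N.
Proof.
move=> k_gt0 x_le; pose m := (\max_(i in A) x i)%N.
have m_le : (m ^ k <= b)%N.
  apply: (big_ind (fun y => y ^ k <= b)%N) => //; first by rewrite exp0n.
  by move=> y1 y2 h1 h2; case: (leqP y1 y2) => h; rewrite ?(maxn_idPr h) ?(maxn_idPl (ltnW h)).
apply: (@leq_trans ((#|A| * m) ^ k)); last by rewrite expnMn leq_mul2l m_le orbT.
by rewrite leq_exp2r // -sum_nat_const leq_sum // => i iA; apply: leq_bigmax_cond.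
Qed.

Lemma cube_root_bound (R : realType) (n m : nat) :
  (m ^ 3 <= 3 ^ n)%N -> (m%:R : R) <= 3%:R `^ (n%:R / 3%:R).
Proof.
move=> m_le; rewrite -(ler_pXn2r (n := 3)) ?nnegrE ?powR_ge0 //.
rewrite -[X in _ <= X]powR_mulrn ?powR_ge0 // -powRrM mulfVK ?powR_mulrn //.
by rewrite -!natrX ler_nat.
Qed.

Section IndependentSets.
Variables (T : finType) (e : rel T).

Lemma independentP (S : {set T}) :
  reflect {in S &, forall x y, ~~ e x y} (independent e S).
Proof.
apply: (iffP forall_inP) => [S_ind x y xS yS | S_ind x xS].
  by move/forall_inP: (S_ind x xS); apply.
by apply/forall_inP => y yS; apply: S_ind.
Qed.

Lemma independentS (A S : {set T}) :
  A \subset S -> independent e S -> independent e A.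
Proof.
move=> /subsetP AS /independentP S_ind.
by apply/independentP => x y xA yA; apply: S_ind; apply: AS.
Qed.

Definition maxindep (U S : {set T}) : bool :=
  [&& S \subset U, independent e S & [forall w in U :\: S, exists s in S, e w s]].

Definition maxindeps (U : {set T}) : {set {set T}} := [set S | maxindep U S].

Definition nbhd (U : {set T}) (v : T) : {set T} := [set u in U | e v u].

Definition cnbhd (U : {set T}) (v : T) : {set T} := v |: nbhd U v.

Lemma maxindeps0 : maxindeps set0 = [set set0].
Proof.
apply/setP => S; rewrite !inE.
apply/idP/eqP => [/and3P[]|->]; first by rewrite subset0 => /eqP.
apply/and3P; split; first exact: sub0set.
  by apply/independentP => x; rewrite inE.
by apply/forall_inP => x; rewrite !inE.
Qed.

Lemma cnbhd_sub (U : {set T}) (v : T) : v \in U -> cnbhd U v \subset U.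
Proof. by move=> vU; apply/subsetP => x; rewrite !inE => /orP[/eqP->|/andP[]]. Qed.

Lemma maxindep_dominated (U S : {set T}) (v : T) :
  maxindep U S -> v \in U -> exists2 u, u \in cnbhd U v & u \in S.
Proof.
case/and3P=> SU _ /forall_inP S_dom vU.
have [vS|vS] := boolP (v \in S); first by exists v; rewrite ?setU11.
have /S_dom/exists_inP[s sS evs] : v \in U :\: S by rewrite inE vS.
by exists s; rewrite // !inE evs (subsetP SU) ?orbT.
Qed.

Hypotheses (e_sym : symmetric e) (e_irr : irreflexive e).

Lemma card_setD_cnbhd (U : {set T}) (u : T) :
  u \in U -> #|U :\: cnbhd U u| = (#|U| - (#|nbhd U u|).+1)%N.
Proof.
by move=> uU; rewrite cardsD (setIidPr (cnbhd_sub uU)) cardsU1 inE e_irr andbF.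
Qed.

Lemma maxindep_delete (U S : {set T}) (u : T) :
  maxindep U S -> u \in S -> maxindep (U :\: cnbhd U u) (S :\ u).
Proof.
case/and3P=> /subsetP SU /independentP S_ind /forall_inP S_dom uS.
apply/and3P; split.
- apply/subsetP => x; rewrite !inE => /andP[xu xS].
  by rewrite (negbTE xu) (negbTE (S_ind _ _ uS xS)) SU ?andbF.
- by apply/independentP => x y; rewrite !inE => /andP[_ xS] /andP[_ yS]; apply: S_ind.
apply/forall_inP => w; rewrite !inE negb_or negb_and.
case/andP=> /orP w_notS /andP[/andP[wu nuw] wU].
have wS : w \notin S by case: w_notS => [/negPn/eqP wu_eq|//]; rewrite wu_eq eqxx in wu.
have /S_dom/exists_inP[s sS ews] : w \in U :\: S by rewrite inE wS wU.
apply/exists_inP; exists s => //; rewrite !inE sS andbT.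
by apply: contraNneq nuw => esu; rewrite wU e_sym -esu ews.
Qed.

Lemma card_maxindeps_le_sum (U : {set T}) (v : T) : v \in U ->
  (#|maxindeps U| <= \sum_(u in cnbhd U v) #|maxindeps (U :\: cnbhd U u)|)%N.
Proof.
move=> vU.
have cover : maxindeps U \subset
    \bigcup_(u in cnbhd U v) [set u |: S | S in maxindeps (U :\: cnbhd U u)].
  apply/subsetP => S; rewrite inE => S_max.
  have [u uv uS] := maxindep_dominated S_max vU.
  apply/bigcupP; exists u => //; apply/imsetP; exists (S :\ u).
    by rewrite inE maxindep_delete.
  by rewrite setD1K.
apply: leq_trans (subset_leq_card cover) _.
apply: leq_trans (card_big_setU _ _ _) _.
by apply: leq_sum => u _; apply: leq_imset_card.
Qed.

Lemma moon_moser (U : {set T}) : (#|maxindeps U| ^ 3 <= 3 ^ #|U|)%N.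
Proof.
have [m] := ubnP #|U|; elim: m U => // m IH U ltU.
have [->|[v0 v0U]] := set_0Vmem U; first by rewrite maxindeps0 cards1 cards0.
(* Every maximal independent set meets the closed neighbourhood of a vertex v
   of minimum degree d; removing the closed neighbourhood of any of its d+1
   vertices leaves at most |U|-d-1 vertices, and (d+1)^3 <= 3^(d+1). *)
pose v := [arg min_(v < v0 in U) #|nbhd U v|].
have [vU v_min] : v \in U /\ forall u, u \in U -> (#|nbhd U v| <= #|nbhd U u|)%N.
  by rewrite /v; case: arg_minnP.
have card_cnbhd : #|cnbhd U v| = (#|nbhd U v|).+1.
  by rewrite cardsU1 inE e_irr andbF.
have deg_lt : (#|nbhd U v| < #|U|)%N.
  by rewrite -ltnS -card_cnbhd ltnS subset_leq_card ?cnbhd_sub.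
apply: (@leq_trans ((\sum_(u in cnbhd U v) #|maxindeps (U :\: cnbhd U u)|) ^ 3)).
  by rewrite leq_exp2r // card_maxindeps_le_sum.
apply: leq_trans (sum_expn_le (b := 3 ^ (#|U| - (#|nbhd U v|).+1)) _ _) _ => //.
  move=> u /(subsetP (cnbhd_sub vU)) uU; have deg_le := v_min u uU.
  apply: leq_trans (IH _ _) _; first by rewrite card_setD_cnbhd //; lia.
  by rewrite card_setD_cnbhd // leq_pexp2l //; lia.
rewrite card_cnbhd; apply: leq_trans (leq_mul (cube_le_exp3 _) (leqnn _)) _.
by rewrite -expnD subnKC.
Qed.

Lemma indep_extend (S : {set T}) :
  independent e S -> ~~ maxindep setT S ->
  exists2 w, w \notin S & independent e (w |: S).
Proof.
move=> S_ind; rewrite /maxindep subsetT S_ind /= => /forall_inPn[w].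
rewrite !inE andbT => wS /exists_inPn w_free; exists w => //.
move/independentP: S_ind => S_ind; apply/independentP => x y.
rewrite !inE => /orP[/eqP->|xS] /orP[/eqP->|yS].
- by rewrite e_irr.
- exact: w_free.
- by rewrite e_sym; apply: w_free.
- exact: S_ind.
Qed.

Lemma maxindeps_gt0 : (0 < #|maxindeps setT|)%N.
Proof.
have set0_ind : independent e set0 by apply/independentP => x; rewrite inE.
pose S := [arg max_(S > set0 | independent e S) #|S|].
have [S_ind S_max] : independent e S /\
    forall S', independent e S' -> (#|S'| <= #|S|)%N.
  by rewrite /S; case: arg_maxnP.
rewrite card_gt0; apply/set0Pn; exists S; rewrite inE.
apply: contraT => /(indep_extend S_ind)[w wS /S_max].
by rewrite cardsU1 wS ltnn.
Qed.

Lemma maxindep_indepT (S : {set T}) :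
  independent e setT -> maxindep setT S -> S = setT.
Proof.
move=> /independentP T_ind /and3P[_ _ /forall_inP S_dom].
apply/setP => w; rewrite inE; apply: contraT => wS.
have /S_dom/exists_inP[s _ ews] : w \in setT :\: S by rewrite !inE wS.
by have := T_ind w s; rewrite !inE ews => /(_ isT isT).
Qed.

Lemma indep_count_step (k : nat) :
  (indep_count e k <=
     #|[set S in maxindeps setT | #|S| == k]| + k.+1 * indep_count e k.+1)%N.
Proof.
rewrite /indep_count.
set A := [set S | independent e S & #|S| == k].
set B := [set S | independent e S & #|S| == k.+1].
rewrite -(cardsID (maxindeps setT) A); apply: leq_add.
  by apply: subset_leq_card; apply/subsetP => S; rewrite !inE => /andP[/andP[_ ->] ->].
have cover : A :\: maxindeps setT \subset
    \bigcup_(S' in B) [set S : {set T} | S \subset S' & #|S| == k].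
  apply/subsetP => S; rewrite !inE => /andP[S_nmax /andP[S_ind /eqP S_k]].
  have [w wS wS_ind] := indep_extend S_ind S_nmax.
  apply/bigcupP; exists (w |: S); last by rewrite inE subsetU1 S_k eqxx.
  by rewrite inE wS_ind cardsU1 wS S_k eqxx.
apply: leq_trans (subset_leq_card cover) _.
apply: leq_trans (card_big_setU _ _ _) _.
rewrite mulnC -sum_nat_const; apply: leq_sum => S'.
by rewrite inE => /andP[_ /eqP S'_k]; rewrite cards_draws S'_k binSn.
Qed.

Lemma indep_count_ratio (k : nat) : (0 < indep_count e k.+1)%N ->
  (indep_count e k <= (#|maxindeps setT| + #|T|).-1 * indep_count e k.+1)%N.
Proof.
move=> i_gt0; have := i_gt0; rewrite card_gt0 => /set0Pn[S'].
rewrite inE => /andP[S'_ind /eqP S'_k].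
have step := indep_count_step k.
have M_gt0 := maxindeps_gt0.
have k_lt : (k.+1 <= #|T|)%N by rewrite -S'_k max_card.
have [mk0|mk_gt0] := posnP #|[set S in maxindeps setT | #|S| == k]|.
  by rewrite mk0 in step; nia.
have k_lt2 : (k.+2 <= #|T|)%N.
  rewrite ltn_neqAle k_lt andbT; apply/eqP => k_eq.
  have S'T : S' = setT by apply/eqP; rewrite eqEcard subsetT cardsT S'_k k_eq /=.
  move: mk_gt0; rewrite card_gt0 => /set0Pn[S]; rewrite !inE => /andP[S_max /eqP S_k].
  rewrite S'T in S'_ind; move: S_k; rewrite (maxindep_indepT S'_ind S_max) cardsT.
  lia.
have mk_le : (#|[set S in maxindeps setT | #|S| == k]| <= #|maxindeps setT|)%N.
  by apply: subset_leq_card; apply/subsetP => S; rewrite inE => /andP[].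
nia.
Qed.

Lemma indep_count_gt0_le (j k : nat) :
  (k <= j)%N -> (0 < indep_count e j)%N -> (0 < indep_count e k)%N.
Proof.
move=> kj; rewrite !card_gt0 => /set0Pn[S]; rewrite inE => /andP[S_ind /eqP S_j].
have : (0 < #|[set A : {set T} | A \subset S & #|A| == k]|)%N.
  by rewrite cards_draws bin_gt0 S_j.
rewrite card_gt0 => /set0Pn[A]; rewrite inE => /andP[AS A_k].
by apply/set0Pn; exists A; rewrite inE A_k (independentS AS S_ind).
Qed.

Lemma indep_count0 : indep_count e 0 = 1%N.
Proof.
rewrite -(cards1 (@set0 T)); congr (#|pred_of_set _|); apply/setP => S.
rewrite !inE cards_eq0; apply/andP/eqP => [[_ /eqP //]|->].
by split=> //; apply/independentP => x; rewrite inE.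
Qed.

Lemma indep_count_eq0 (k : nat) : (#|T| < k)%N -> indep_count e k = 0%N.
Proof.
move=> T_lt; apply/eqP; rewrite cards_eq0; apply/eqP/setP => S; rewrite !inE.
by apply/negbTE; apply: contraTN T_lt => /andP[_ /eqP <-]; rewrite -leqNgt max_card.
Qed.

Lemma coef_indep_poly (R : nzRingType) (k : nat) :
  (indep_poly R e)`_k = (indep_count e k)%:R.
Proof. by rewrite coef_poly; case: ltnP => // T_lt; rewrite indep_count_eq0. Qed.

Lemma indep_poly_neq0 (R : nzRingType) : indep_poly R e != 0.
Proof.
apply/eqP => p0; have := coef_indep_poly R 0; rewrite p0 coef0 indep_count0.
by move/eqP; rewrite eq_sym oner_eq0.
Qed.

Lemma indep_count_gt0_size (R : numDomainType) (k : nat) :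
  (k < size (indep_poly R e))%N -> (0 < indep_count e k)%N.
Proof.
move=> k_lt; apply: (indep_count_gt0_le (j := (size (indep_poly R e)).-1)).
  by rewrite -ltnS prednK // (leq_ltn_trans _ k_lt).
have : lead_coef (indep_poly R e) != 0 by rewrite lead_coef_eq0 indep_poly_neq0.
by rewrite lead_coefE coef_indep_poly pnatr_eq0 -lt0n.
Qed.

End IndependentSets.

Local Open Scope complex_scope.

Theorem theorem3 (R : realType) (n : nat) (e : rel 'I_n) (z : R[i]) :
  (1 <= n)%N -> simple_graph e ->
  root (indep_poly R[i] e) z ->
  `|z| <= ((3%:R `^ (n%:R / 3%:R) + n%:R - 1 : R)%:C).
Proof.
move=> _ [e_sym e_irr] pz.
pose t : R := 3%:R `^ (n%:R / 3%:R).
pose M := #|maxindeps e setT|.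
have M_le_t : (M%:R : R) <= t.
  by apply: cube_root_bound; rewrite -[X in (_ <= 3 ^ X)%N]card_ord -cardsT moon_moser.
have M_gt0 : (0 < M)%N := maxindeps_gt0 e_sym e_irr.
have ratio_le : (((M + n).-1)%:R : R) <= t + n%:R - 1.
  by rewrite -subn1 natrB ?addn_gt0 ?M_gt0 // natrD; lra.
apply: (norm_root_le_coef_ratio (indep_poly_neq0 e _) _ _ _ pz).
- by rewrite ler0c; apply: le_trans ratio_le.
- by move=> k /indep_count_gt0_size k_gt0; rewrite coef_indep_poly ltr0n.
move=> k /indep_count_gt0_size i_gt0; rewrite !coef_indep_poly.
rewrite -!(rmorph_nat (real_complex R)) -rmorphM lecR.
apply: le_trans (ler_wpM2r (ler0n _ _) ratio_le).
by rewrite -natrM ler_nat -[X in (M + X)%N]card_ord indep_count_ratio.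
Qed.
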